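(* Let $c$ and $n$ be odd positive integers with $n>c$. Consider lattice paths in an $(n-c-1)\times(n-c-1)$ grid from the top-left corner to the bottom-right corner, using unit right and down steps and never going strictly below the diagonal joining these two corners. Then the number of such paths with an even number of unit squares of the grid lying above the path exceeds the number with an odd number of such squares by $C_{\frac{n-c-2}{2}}$, where $C_r=\frac{1}{r+1}\binom{2r}{r}$ is the $r$th Catalan number. *)

From mathcomp Require Import all_boot.
Set Implicit Arguments. Unset Strict Implicit. Unset Printing Implicit Defensive.

(* A lattice path in the m x m grid from the top-left corner to the
   bottom-right corner is encoded as a sequence of steps:
   true = unit right step, false = unit down step.
   Starting at the top-left corner, after a prefix with r right steps and
   d down steps the path is at column r, row d (rows counted downwards);
   the diagonal joining the corners is r = d, and "strictly below the
   diagonal" means d > r. *)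

Definition grid_path (m : nat) (s : seq bool) : bool :=
  [&& size s == (2 * m)%N, count id s == m &
      all (fun i => count negb (take i s) <= count id (take i s))
          (iota 0 (size s).+1)].

(* Number of unit squares of the m x m grid lying above the path:
   the i-th step, if it is a down step, traverses a row at column
   x = (number of right steps before it); the squares of that row lying
   above (i.e. to the upper right of) the path are the m - x squares to
   the right of the step.  Rows are in bijection with down steps. *)
Definition squares_above (m : nat) (s : seq bool) : nat :=
  \sum_(i < size s | ~~ nth true s i) (m - count id (take i s)).

Definition catalan (r : nat) : nat := 'C(r.*2, r) %/ r.+1.

From mathcomp Require Import all_boot all_algebra.
From mathcomp Require Import zify ring.
Import GRing.Theory Num.Theory.

(* Weigh every path by (-1)^(number of squares above it); the difference of
   the two counts is the sum of these signs.  Building a path step by step,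
   a down step taken after u right steps contributes m - u squares, so the
   signed count of the completions from a position obeys a Pascal-like
   recurrence in which down steps carry the sign (-1)^(m - u).  By parity of
   the remaining numbers of steps, its solution either vanishes or is a
   ballot number 'C(a + b, b) - 'C(a + b, b - 1); for the whole odd grid
   m = 2k + 1 it is the ballot number for (k, k), the Catalan number C_k. *)

Lemma big_tuple0 (R : Type) (idx : R) (op : Monoid.law idx) (T : finType)
    (F : 0.-tuple T -> R) :
  \big[op/idx]_(t : 0.-tuple T) F t = F [tuple].
Proof. by rewrite (big_pred1 [tuple]) // => t; apply/esym/eqP/tuple0. Qed.

Lemma big_tupleS (R : Type) (idx : R) (op : Monoid.com_law idx) (T : finType)
    n (F : n.+1.-tuple T -> R) :
  \big[op/idx]_(t : n.+1.-tuple T) F t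
  = \big[op/idx]_(x : T) \big[op/idx]_(t : n.-tuple T) F [tuple of x :: t].
Proof.
rewrite pair_bigA (reindex (fun p : T * n.-tuple T => [tuple of p.1 :: p.2])) //.
exists (fun t => (thead t, [tuple of behead t])) => [[x t] _ | t _].
  by congr (_, _); apply: val_inj.
exact/esym/tuple_eta.
Qed.

Local Open Scope ring_scope.

Definition ballot (a b : nat) : int :=
  'C(a + b, b)%:R - (if b is b'.+1 then 'C(a + b, b') else 0%N)%:R.

Lemma ballotn0 a : ballot a 0 = 1.
Proof. by rewrite /ballot bin0 subr0. Qed.

Lemma ballotSS a b : ballot a.+1 b.+1 = ballot a.+1 b + ballot a b.+1.
Proof.
rewrite /ballot; case: b => [|b]; rewrite !addSn !addnS ?addn0 !binS ?bin0 !natrD.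
all: ring.
Qed.

Lemma ballot_diagS a : ballot a a.+1 = 0.
Proof.
rewrite /ballot -(bin_sub (leq_addr a.+1 a)) (_ : a + a.+1 - a = a.+1)%N ?subrr //.
lia.
Qed.

Lemma ballot_diag k : ballot k k = (catalan k)%:R.
Proof.
case: k => [|k]; first by rewrite /ballot /catalan.
rewrite /ballot /catalan -addnn.
set X := 'C(_, k.+1); set Y := 'C(_, k).
have XY : (Y * k.+2 = X * k.+1)%N.
  by move: (mul_bin_left (k.+1 + k.+1) k); rewrite (_ : k.+1 + k.+1 - k = k.+2)%N //; lia.
have -> : X = (k.+2 * (X - Y))%N by rewrite mulnBr; nia.
by rewrite mulKn // natrB //; nia.
Qed.

(* Closed form of the signed count of the completions of a path with p right
   and q >= p down steps still to take. *)
Definition signed_ballot (p q : nat) : int :=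
  if odd p && ~~ odd q then 0 else ballot q.-1./2 p./2.

Lemma signed_ballot_odd_odd b c : signed_ballot b.*2.+1 c.*2.+1 = ballot c b.
Proof. by rewrite /signed_ballot /= !odd_double /= ?half_double ?uphalf_double. Qed.

Lemma signed_ballot_even_odd b c : signed_ballot b.*2 c.*2.+1 = ballot c b.
Proof. by rewrite /signed_ballot /= !odd_double /= ?half_double ?uphalf_double. Qed.

Lemma signed_ballot_even_even b c : signed_ballot b.*2 c.*2.+2 = ballot c b.
Proof. by rewrite /signed_ballot /= !odd_double /= ?half_double ?uphalf_double. Qed.

Lemma signed_ballot_odd_even b c : signed_ballot b.*2.+1 c.*2.+2 = 0.
Proof. by rewrite /signed_ballot /= !odd_double. Qed.

Lemma signed_ballot_rec p q : (p <= q)%N -> (0 < q)%N ->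
  signed_ballot p q = (if (0 < p)%N then signed_ballot p.-1 q else 0)
                      + (if (p < q)%N then (-1) ^+ p * signed_ballot p q.-1 else 0).
Proof.
have sign_double k : (-1) ^+ k.*2 = 1 :> int by rewrite -signr_odd odd_double.
rewrite -(odd_double_half p) -(odd_double_half q).
case: (odd p); case: (odd q); move: p./2 q./2 => b c.
all: rewrite ?add0n ?add1n => le_pq q_gt0.
- rewrite signed_ballot_odd_odd /= signed_ballot_even_odd.
  case: c {le_pq q_gt0} => [|c]; first by rewrite addr0.
  by rewrite doubleS signed_ballot_odd_even mulr0 if_same addr0.
- case: c le_pq q_gt0 => [|c] // le_pq _.
  rewrite doubleS signed_ballot_odd_even /= signed_ballot_even_even signed_ballot_odd_odd.
  rewrite ifT; last by lia.
  by rewrite exprS sign_double mulr1 mulN1r subrr.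
- have -> : (b.*2 < c.*2.+1)%N by lia.
  rewrite signed_ballot_even_odd /= sign_double mul1r.
  case: b le_pq => [|b] le_pq; case: c le_pq {q_gt0} => [|c] //= le_pq.
  + by rewrite add0r doubleS signed_ballot_even_even !ballotn0.
  + by rewrite signed_ballot_odd_odd (doubleS c) signed_ballot_even_even ballotSS.
- case: c le_pq q_gt0 => [|c] // le_pq _.
  rewrite doubleS signed_ballot_even_even /=.
  case: b le_pq => [|b] le_pq /=.
    by rewrite add0r sign_double mul1r signed_ballot_even_odd.
  rewrite signed_ballot_odd_even add0r.
  case: (ltnP b.+1.*2 c.*2.+2) => [_ | ge_pq].
    by rewrite sign_double mul1r signed_ballot_even_odd.
  have -> : b = c by lia.
  by rewrite ballot_diagS.
Qed.

Lemma card_even_odd (T : finType) (P : pred T) (f : T -> nat) :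
  (#|[set t | P t && ~~ odd (f t)]|%:R : int)
  = #|[set t | P t && odd (f t)]|%:R + \sum_(t | P t) (-1) ^+ f t.
Proof.
rewrite -!sum1_card !natr_sum [LHS]big_mkcond [X in _ = X + _]big_mkcond.
rewrite (big_mkcond P) -big_split /=.
apply: eq_bigr => t _; rewrite !inE -signr_odd.
by case: (P t); case: (odd (f t)); rewrite ?addrN ?add0r.
Qed.

Lemma all_iota0S (P : pred nat) n :
  all P (iota 0 n.+1) = P 0%N && all (fun i => P i.+1) (iota 0 n).
Proof. by rewrite /= -[1%N]/(1 + 0)%N iotaDl all_map. Qed.

Section GridPathCompletion.
Variable m : nat.

Definition grid_path_from (u d : nat) (s : seq bool) : bool :=
  [&& u + count id s == m, d + count negb s == m &
      all (fun i => d + count negb (take i s) <= u + count id (take i s))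
          (iota 0 (size s).+1)]%N.

Definition squares_above_from (u : nat) (s : seq bool) : nat :=
  (\sum_(i < size s | ~~ nth true s i) (m - (u + count id (take i s))))%N.

Lemma grid_path_from0 s : grid_path m s = grid_path_from 0 0 s.
Proof.
rewrite /grid_path /grid_path_from !add0n -(count_predC id) mul2n -addnn.
by case: (count id s =P m) => [-> | _]; rewrite ?eqn_add2l //= andbF.
Qed.

Lemma grid_path_from_cons u d x s :
  grid_path_from u d (x :: s) = (d <= u)%N && grid_path_from (u + x) (d + ~~ x) s.
Proof.
rewrite /grid_path_from [size _]/= all_iota0S take0 !addn0.
set prefix_ok := all _ _.
have -> : prefix_ok = all (fun i => d + ~~ x + count negb (take i s)
                                    <= u + x + count id (take i s))%N (iota 0 (size s).+1).
  by apply: eq_all => i /=; rewrite !addnA.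
by rewrite /= !addnA ?addn0; case: (d <= u)%N; rewrite ?andbF.
Qed.

Lemma grid_path_from_le u d s : grid_path_from u d s -> (d <= u)%N.
Proof.
case: s => [|x s]; last by rewrite grid_path_from_cons => /andP[].
by case/and3P => /eqP u_m /eqP d_m _; rewrite -(addn0 u) -(addn0 d) u_m -d_m.
Qed.

Lemma grid_path_from_gt u d s : (m < u)%N -> grid_path_from u d s = false.
Proof. by move=> lt_mu; rewrite /grid_path_from eqn_leq leqNgt ltn_addr. Qed.

Lemma squares_above_from_cons u x s :
  squares_above_from u (x :: s)
  = ((if x then 0 else m - u) + squares_above_from (u + x) s)%N.
Proof.
rewrite /squares_above_from /= big_mkcond big_ord_recl /= addn0 [in RHS]big_mkcond.
congr (_ + _)%N; first by case: x.
by apply: eq_bigr => i _; rewrite add0n addnA.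
Qed.

Definition signed_count (u d L : nat) : int :=
  \sum_(t : L.-tuple bool | grid_path_from u d t) (-1) ^+ squares_above_from u t.

Lemma signed_count0 u d :
  (d <= u)%N -> signed_count u d 0 = ((u == m) && (d == m))%:R.
Proof.
move=> le_du; rewrite /signed_count big_mkcond big_tuple0 /grid_path_from /= !addn0 le_du.
by rewrite /squares_above_from big_ord0 !andbT; case: (_ && _).
Qed.

Lemma signed_count_gt u d L : (m < u)%N -> signed_count u d L = 0.
Proof.
by move=> lt_mu; rewrite /signed_count big_pred0 // => t; rewrite grid_path_from_gt.
Qed.

Lemma signed_countS u d L : (d <= u)%N ->
  signed_count u d L.+1
  = signed_count u.+1 d L
    + (if (d < u)%N then (-1) ^+ (m - u) * signed_count u d.+1 L else 0).
Proof.
move=> le_du; rewrite /signed_count big_mkcond big_tupleS big_bool /=.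
congr (_ + _).
  rewrite [RHS]big_mkcond; apply: eq_bigr => t _.
  by rewrite grid_path_from_cons squares_above_from_cons le_du addn0 addn1.
case: ltnP => [lt_du | le_ud].
  rewrite [in RHS]big_mkcond mulr_sumr; apply: eq_bigr => t _.
  rewrite grid_path_from_cons squares_above_from_cons le_du addn0 addn1 exprD.
  by case: (grid_path_from _ _ t); rewrite ?mulr0.
have <- : d = u by apply/eqP; rewrite eqn_leq le_du.
rewrite big1 // => t _; rewrite grid_path_from_cons addn0 addn1 andbC.
by case: ifP => // /andP[/grid_path_from_le]; rewrite ltnn.
Qed.

Lemma signed_countE u d : (u <= m)%N -> (d <= u)%N ->
  signed_count u d (m - u + (m - d)) = signed_ballot (m - u) (m - d).
Proof.
move def_L: (m - u + (m - d))%N => L.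
elim: L u d def_L => [|L IH] u d def_L le_um le_du.
  have u_m : u = m by lia.
  have d_m : d = m by lia.
  by rewrite signed_count0 // u_m d_m eqxx subnn.
rewrite signed_countS // signed_ballot_rec; [|lia|lia].
congr (_ + _).
  have [lt_um | le_mu] := ltnP u m.
    by rewrite ifT ?IH; [congr signed_ballot | ..]; lia.
  by rewrite ifF ?signed_count_gt //; lia.
have -> : (m - u < m - d)%N = (d < u)%N by apply/idP/idP; lia.
by case: ifP => // lt_du; rewrite IH; [congr (_ * signed_ballot _ _) | ..]; lia.
Qed.

End GridPathCompletion.

Local Close Scope ring_scope.

Lemma card_even_squares_above k (m := k.*2.+1) :
  #|[set t : (2 * m).-tuple bool | grid_path m t && ~~ odd (squares_above m t)]|
  = #|[set t : (2 * m).-tuple bool | grid_path m t && odd (squares_above m t)]|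
    + catalan k.
Proof.
apply/eqP; rewrite -(eqr_nat int) natrD; apply/eqP.
rewrite (card_even_odd _ (fun t : (2 * m).-tuple bool => grid_path m t)); congr (_ + _)%R.
transitivity (signed_count m 0 0 (2 * m)).
  by apply: eq_bigl => t; rewrite grid_path_from0.
rewrite mul2n -addnn -{1 2}(subn0 m) signed_countE // subn0.
by rewrite signed_ballot_odd_odd ballot_diag.
Qed.

Theorem lemma2p20 (c n : nat) :
  odd c -> odd n -> 0 < c -> c < n ->
  #|[set t : (2 * (n - c - 1)).-tuple bool |
       grid_path (n - c - 1) t && ~~ odd (squares_above (n - c - 1) t)]|
  = #|[set t : (2 * (n - c - 1)).-tuple bool |
       grid_path (n - c - 1) t && odd (squares_above (n - c - 1) t)]|
    + catalan ((n - c - 2) %/ 2).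
Proof.
move=> odd_c odd_n _ lt_cn.
have even_nc : ~~ odd (n - c) by rewrite (oddB (ltnW lt_cn)) odd_n odd_c.
have -> : n - c - 1 = ((n - c - 2) %/ 2).*2.+1.
  by move: (odd_double_half (n - c)); rewrite (negbTE even_nc) divn2; lia.
exact: card_even_squares_above.
Qed.
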